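(* Let $\mathbb{V}=V\times\{0\}$ be a horizontal homogeneous subgroup of $\mathbb{H}^n$ with $k=\dim V$, and let $\pi_{\mathbb{V}^\perp}\colon\mathbb{H}^n\to\mathbb{V}^\perp$ be the projection associated with $\mathbb{H}^n=\mathbb{V}^\perp\ltimes\mathbb{V}$. Equip $\mathbb{H}^n$ with the Korányi metric and $\mathbb{V}^\perp$ with the Euclidean metric of $\mathbb{R}^{2n+1}$. Then $\pi_{\mathbb{V}^\perp}$ is locally David–Semmes $(k+1)$-regular, i.e. $(\mathbb{H}^n,(\mathbb{V}^\perp,d_{\mathbb{R}^{2n+1}}),\pi_{\mathbb{V}^\perp})$ is a $(k+1)$-foliation.
   Context: $\mathbb{H}^n=\mathbb{R}^{2n}\times\mathbb{R}$ with group law $(x,t)*(x',t')=(x+x',t+t'+2\omega(x,x'))$, $\omega(x,x')=\sum_{i=1}^n(x_{n+i}x'_i-x_ix'_{n+i})$, Korányi metric $d_{\mathbb{H}}(p,q)=\|p^{-1}*q\|_{\mathbb{H}}$, $\|(x,t)\|_{\mathbb{H}}=(|x|^4+t^2)^{1/4}$. Horizontal homogeneous subgroup: $\mathbb{V}=V\times\{0\}$ with $V\subseteq\mathbb{R}^{2n}$ a subspace on which $\omega\equiv0$; $\mathbb{V}^\perp=V^\perp\times\mathbb{R}$. Writing uniquely $p=p_{\mathbb{V}^\perp}*p_{\mathbb{V}}$, set $\pi_{\mathbb{V}^\perp}(p)=p_{\mathbb{V}^\perp}$; its fibers are the left cosets $a*\mathbb{V}$. A surjection $\pi\colon X\to W$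 between proper metric spaces is locally David–Semmes $s$-regular if for every compact $K\subseteq X$, $\pi|_K$ is Lipschitz and there are $C\ge1$, $r_0>0$ such that for every ball $B\subseteq W$ of radius $r<r_0$, $\pi^{-1}(B)\cap K$ can be covered by at most $Cr^{-s}$ balls in $X$ of radius $Cr$; $(X,W,\pi)$ is then an $s$-foliation. *)

From Stdlib Require Import Reals List.
From mathcomp Require Import ssreflect ssrfun ssrbool eqtype ssrnat seq
  choice fintype bigop.
Set Implicit Arguments.
Unset Strict Implicit.
Unset Printing Implicit Defensive.
Open Scope R_scope.

Definition vec (m : nat) := 'I_m -> R.

Definition rsum (m : nat) (f : 'I_m -> R) : R := \big[Rplus/R0]_(i < m) f i.

Definition vzero (m : nat) : vec m := fun _ => 0.
Definition vadd (m : nat) (x y : vec m) : vec m := fun j => x j + y j.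
Definition vscal (m : nat) (a : R) (x : vec m) : vec m := fun j => a * x j.
Definition vsub (m : nat) (x y : vec m) : vec m := fun j => x j - y j.
Definition inner (m : nat) (x y : vec m) : R := rsum (fun j => x j * y j).
Definition norm2 (m : nat) (x : vec m) : R := inner x x.

Definition lincomb (m k : nat) (c : 'I_k -> R) (b : 'I_k -> vec m) : vec m :=
  fun j => rsum (fun i => c i * b i j).

Definition is_subspace (m : nat) (V : vec m -> Prop) : Prop :=
  V (@vzero m) /\
  (forall x y, V x -> V y -> V (vadd x y)) /\
  (forall a x, V x -> V (vscal a x)).

Definition has_dim (m : nat) (V : vec m -> Prop) (k : nat) : Prop :=
  exists b : 'I_k -> vec m,
    (forall c : 'I_k -> R, lincomb c b = @vzero m -> forall i, c i = 0) /\
    (forall v, V v <-> exists c : 'I_k -> R, v = lincomb c b).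

Definition orth (m : nat) (V : vec m -> Prop) (x : vec m) : Prop :=
  forall v, V v -> inner x v = 0.

(* R^{2n} is represented as vec (n + n); coordinate i (< n) is [lshift n i],
   coordinate n+i is [rshift n i]. *)
Definition hpt (n : nat) := (vec (n + n) * R)%type.

Definition omega (n : nat) (x y : vec (n + n)) : R :=
  rsum (fun i : 'I_n =>
          x (rshift n i) * y (lshift n i) - x (lshift n i) * y (rshift n i)).

Definition hmul (n : nat) (p q : hpt n) : hpt n :=
  (vadd p.1 q.1, p.2 + q.2 + 2 * omega p.1 q.1).

Definition hinv (n : nat) (p : hpt n) : hpt n :=
  (fun j => - p.1 j, - p.2).

Definition koranyi (n : nat) (p : hpt n) : R :=
  sqrt (sqrt (norm2 p.1 ^ 2 + p.2 ^ 2)).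

Definition dH (n : nat) (p q : hpt n) : R := koranyi (hmul (hinv p) q).

Definition dE (n : nat) (p q : hpt n) : R :=
  sqrt (norm2 (vsub p.1 q.1) + (p.2 - q.2) ^ 2).

(* horizontal homogeneous subgroup: V subspace of R^{2n} with omega = 0 on V *)
Definition isotropic (n : nat) (V : vec (n + n) -> Prop) : Prop :=
  forall x y, V x -> V y -> omega x y = 0.

Definition Vperp (n : nat) (V : vec (n + n) -> Prop) (p : hpt n) : Prop :=
  orth V p.1.

(* pi is the projection pi_{V^perp}: p = pi(p) * p_V with pi(p) in V^perp and
   p_V in V x {0} (this decomposition is unique). *)
Definition is_Vperp_projection (n : nat) (V : vec (n + n) -> Prop)
  (pi : hpt n -> hpt n) : Prop :=
  forall p, Vperp V (pi p) /\ exists v, V v /\ p = hmul (pi p) (v, 0).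

Definition is_open {X : Type} (d : X -> X -> R) (U : X -> Prop) : Prop :=
  forall x, U x -> exists e, 0 < e /\ forall y, d x y < e -> U y.

Definition is_compact {X : Type} (d : X -> X -> R) (K : X -> Prop) : Prop :=
  forall (I : Type) (U : I -> X -> Prop),
    (forall i, is_open d (U i)) ->
    (forall x, K x -> exists i, U i x) ->
    exists l : list I, forall x, K x -> exists i, In i l /\ U i x.

Definition locally_DS_regular {X W : Type} (dX : X -> X -> R)
  (Wset : W -> Prop) (dW : W -> W -> R) (pi : X -> W) (s : R) : Prop :=
  (forall x, Wset (pi x)) /\
  (forall w, Wset w -> exists x, pi x = w) /\
  forall K : X -> Prop, is_compact dX K ->
    (exists L, forall x y, K x -> K y -> dW (pi x) (pi y) <= L * dX x y) /\
    exists C r0, 1 <= C /\ 0 < r0 /\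
      forall w r, Wset w -> 0 < r -> r < r0 ->
        exists l : list X,
          INR (length l) <= C * Rpower r (- s) /\
          forall x, K x -> dW (pi x) w < r ->
            exists y, In y l /\ dX x y < C * r.

Definition foliation {X W : Type} (dX : X -> X -> R)
  (Wset : W -> Prop) (dW : W -> W -> R) (pi : X -> W) (s : R) : Prop :=
  locally_DS_regular dX Wset dW pi s.

(* Write x = pi(x) * (v, 0) with v in V.  The Koranyi distance dH(x, y) is
   comparable to max(|y_1 - x_1|, |g|^(1/2)), where
   g = y_2 - x_2 - 2 omega(x_1, y_1) is the vertical coordinate of x^-1 * y
   ([dH_lower], [dH_upper]).
   - Compact sets are bounded for the gauge |x_1|_1 + |x_2|, which is
     dH-continuous ([compact_bounded]).
   - On bounded sets pi is Lipschitz: the horizontal parts of pi(x) and of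
     (v, 0) are orthogonal, and the vertical part is controlled through the
     bilinearity of omega ([pi_lipschitz]).
   - Covering: if pi(x) is r-close to w, then x is dH-close (O(r)) to some
     w * (g, s), where g runs over an r-grid of the bounded part of V
     (O(r^-k) points, since dim V = k) and s over an r^2-grid of an interval
     of length O(r) (O(r^-1) points).  Isotropy omega(v, g) = 0 keeps the
     vertical error of order r^2 ([pi_fibre_cover]).
   - pi fixes V^perp x R, hence is onto ([pi_fixes_Vperp]). *)
Set Warnings "-notation-overridden,-ambiguous-paths,-notation-incompatible-prefix".
From Stdlib Require Import Reals List Lra Lia Psatz.
From Stdlib Require Import ZArith FunctionalExtensionality IndefiniteDescription.
From mathcomp Require Import ssreflect ssrfun ssrbool eqtype ssrnat seq
  choice fintype finfun bigop.
From mathcomp Require Import ssralg matrix mxalgebra.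
From mathcomp Require Import Rstruct.
Open Scope R_scope.
Set Implicit Arguments.
Unset Strict Implicit.

Lemma rsum_ext m (f g : 'I_m -> R) : (forall i, f i = g i) -> rsum f = rsum g.
Proof. by move=> fg; apply: eq_bigr => i _; exact: fg. Qed.

Lemma rsum_add m (f g : 'I_m -> R) :
  rsum (fun i => f i + g i) = rsum f + rsum g.
Proof. exact: big_split. Qed.

Lemma rsum_scal m (a : R) (f : 'I_m -> R) :
  rsum (fun i => a * f i) = a * rsum f.
Proof.
rewrite /rsum; elim/big_ind2: _ => //; first by rewrite Rmult_0_r.
by move=> x1 x2 y1 y2 -> ->; rewrite Rmult_plus_distr_l.
Qed.

Lemma rsum_sub m (f g : 'I_m -> R) :
  rsum (fun i => f i - g i) = rsum f - rsum g.
Proof.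
have -> : rsum f - rsum g = rsum f + (-1) * rsum g by ring.
by rewrite -rsum_scal -rsum_add; apply: rsum_ext => i; ring.
Qed.

Lemma rsum_le m (f g : 'I_m -> R) : (forall i, f i <= g i) -> rsum f <= rsum g.
Proof.
move=> fg; rewrite /rsum; elim/big_ind2: _ => //; first exact: Rle_refl.
by move=> x1 x2 y1 y2; apply: Rplus_le_compat.
Qed.

Lemma rsum_abs m (f : 'I_m -> R) : Rabs (rsum f) <= rsum (fun i => Rabs (f i)).
Proof.
rewrite /rsum; elim/big_ind2: _ => //.
- by rewrite Rabs_R0; exact: Rle_refl.
- move=> x1 x2 y1 y2 H1 H2.
  by apply: Rle_trans (Rabs_triang _ _) _; apply: Rplus_le_compat.
- by move=> i _; exact: Rle_refl.
Qed.

Lemma rsum_nonneg m (f : 'I_m -> R) : (forall i, 0 <= f i) -> 0 <= rsum f.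
Proof.
move=> f0; rewrite /rsum; elim/big_ind: _ => //; first exact: Rle_refl.
move=> x y; lra.
Qed.

Lemma rsum_const_le m (f : 'I_m -> R) c :
  (forall i, f i <= c) -> rsum f <= INR m * c.
Proof.
elim: m f => [|m IH] f fc; first by rewrite /rsum big_ord0 /=; lra.
have -> : rsum f = rsum (fun i : 'I_m => f (widen_ord (leqnSn m) i)) + f ord_max.
  by rewrite /rsum big_ord_recr.
have := IH _ (fun i => fc (widen_ord (leqnSn m) i)); have := fc ord_max.
rewrite S_INR; lra.
Qed.

Lemma rsum_term_le m (f : 'I_m -> R) j : (forall i, 0 <= f i) -> f j <= rsum f.
Proof.
move=> f0.
have -> : rsum f = f j + \big[Rplus/R0]_(i < m | i != j) f i.
  by rewrite /rsum (bigD1 j).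
have : 0 <= \big[Rplus/R0]_(i < m | i != j) f i.
  by elim/big_ind: _ => //; [exact: Rle_refl | move=> x y; lra].
lra.
Qed.

Lemma entry_bound m k (A : 'I_k -> 'I_m -> R) :
  exists B, 0 <= B /\ forall i j, Rabs (A i j) <= B.
Proof.
have row0 i : 0 <= rsum (fun j => Rabs (A i j)).
  by apply: rsum_nonneg => j; exact: Rabs_pos.
exists (rsum (fun i => rsum (fun j => Rabs (A i j)))); split.
  exact: rsum_nonneg row0.
move=> i j.
have := @rsum_term_le _ (fun j => Rabs (A i j)) j (fun _ => Rabs_pos _).
have := @rsum_term_le _ _ i row0; rewrite /=; lra.
Qed.

Lemma sqabs a : Rabs a * Rabs a = a * a.
Proof. by rewrite -Rabs_mult Rabs_right //; nra. Qed.

Lemma abs_le_of_sq a d : 0 <= d -> a * a <= d * d -> Rabs a <= d.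
Proof. move=> d0 H; have := sqabs a; have := Rabs_pos a; nra. Qed.

Lemma sqrt_sq_le a b : 0 <= a -> a * a <= b -> a <= sqrt b.
Proof. by move=> a0 H; rewrite -(sqrt_square a) //; apply: sqrt_le_1_alt. Qed.

Lemma sq_le_of_sqrt_lt X r : 0 <= X -> sqrt X < r -> X <= r * r.
Proof. move=> X0 H; have := sqrt_pos X; have := sqrt_sqrt X X0; nra. Qed.

Lemma nat_between y : 0 <= y -> exists N : nat, y <= INR N /\ INR N <= y + 1.
Proof.
move=> y0; have [A B] := archimed y.
have up0 : (0 < up y)%Z by apply: lt_0_IZR; lra.
by exists (Z.to_nat (up y)); rewrite INR_IZR_INZ Z2Nat.id; [lra | lia].
Qed.

Definition l1norm m (x : vec m) : R := rsum (fun j => Rabs (x j)).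

Lemma norm2_nonneg m (x : vec m) : 0 <= norm2 x.
Proof. by apply: rsum_nonneg => i; nra. Qed.

Lemma coord_le_norm m (x : vec m) d j :
  0 <= d -> norm2 x <= d * d -> Rabs (x j) <= d.
Proof.
move=> d0 H; apply: abs_le_of_sq => //; apply: Rle_trans H.
by apply: (@rsum_term_le _ (fun j => x j * x j)) => i; nra.
Qed.

Lemma norm2_le_coords m (x : vec m) c :
  (forall j, Rabs (x j) <= c) -> norm2 x <= INR m * (c * c).
Proof.
move=> xc; apply: rsum_const_le => j; rewrite -sqabs.
have := xc j; have := Rabs_pos (x j); nra.
Qed.

Lemma l1norm_nonneg m (x : vec m) : 0 <= l1norm x.
Proof. by apply: rsum_nonneg => i; exact: Rabs_pos. Qed.

Lemma coord_le_l1norm m (x : vec m) j : Rabs (x j) <= l1norm x.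
Proof. by apply: (@rsum_term_le _ (fun j => Rabs (x j))) => i; exact: Rabs_pos. Qed.

Lemma norm2_le_l1norm m (x : vec m) : norm2 x <= l1norm x * l1norm x.
Proof.
rewrite {2}/l1norm -rsum_scal; apply: rsum_le => i; rewrite -sqabs.
have := coord_le_l1norm x i; have := Rabs_pos (x i); nra.
Qed.

Lemma l1norm_triang m (x y : vec m) : l1norm y <= l1norm x + l1norm (vsub y x).
Proof.
rewrite /l1norm -rsum_add; apply: rsum_le => j.
have -> : y j = x j + vsub y x j by rewrite /vsub; ring.
exact: Rabs_triang.
Qed.

Lemma norm2_vsub_sym m (x y : vec m) : norm2 (vsub x y) = norm2 (vsub y x).
Proof. by apply: rsum_ext => i; rewrite /vsub; ring. Qed.

Lemma pythagoras m (u v : vec m) : inner u v = 0 ->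
  norm2 u <= norm2 (vadd u v) /\ norm2 v <= norm2 (vadd u v).
Proof.
move=> uv.
have -> : norm2 (vadd u v) = norm2 u + 2 * inner u v + norm2 v.
  by rewrite /norm2 /inner -rsum_scal -!rsum_add; apply: rsum_ext => i;
     rewrite /vadd; ring.
by rewrite uv; have := norm2_nonneg u; have := norm2_nonneg v; lra.
Qed.

Section Omega.
Variable n : nat.
Implicit Types x y z : vec (n + n).

Lemma omega_addl x y z : omega (vadd x y) z = omega x z + omega y z.
Proof. by rewrite /omega -rsum_add; apply: rsum_ext => i; rewrite /vadd; ring. Qed.
Lemma omega_addr x y z : omega z (vadd x y) = omega z x + omega z y.
Proof. by rewrite /omega -rsum_add; apply: rsum_ext => i; rewrite /vadd; ring. Qed.
Lemma omega_subl x y z : omega (vsub x y) z = omega x z - omega y z.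
Proof. by rewrite /omega -rsum_sub; apply: rsum_ext => i; rewrite /vsub; ring. Qed.
Lemma omega_subr x y z : omega z (vsub x y) = omega z x - omega z y.
Proof. by rewrite /omega -rsum_sub; apply: rsum_ext => i; rewrite /vsub; ring. Qed.

Lemma omega_anti x y : omega x y = - omega y x.
Proof.
have -> : - omega y x = (-1) * omega y x by ring.
by rewrite /omega -rsum_scal; apply: rsum_ext => i; ring.
Qed.

Lemma omega_self x : omega x x = 0.
Proof. by have := omega_anti x x; lra. Qed.

Lemma omega_zero_r x : omega x (@vzero (n + n)) = 0.
Proof.
have := omega_addr (@vzero (n + n)) (@vzero (n + n)) x.
have -> : vadd (@vzero (n + n)) (@vzero (n + n)) = @vzero (n + n).
  by apply: functional_extensionality => j; rewrite /vadd /vzero; ring.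
lra.
Qed.

Lemma omega_oppl x y : omega (fun j => - x j) y = - omega x y.
Proof.
have -> : - omega x y = (-1) * omega x y by ring.
by rewrite /omega -rsum_scal; apply: rsum_ext => i; ring.
Qed.

Lemma omega_bound x y cx cy :
  (forall j, Rabs (x j) <= cx) -> (forall j, Rabs (y j) <= cy) ->
  Rabs (omega x y) <= 2 * INR n * (cx * cy).
Proof.
move=> xc yc; apply: Rle_trans (rsum_abs _) _.
have -> : 2 * INR n * (cx * cy) = INR n * (2 * (cx * cy)) by ring.
apply: rsum_const_le => i; apply: Rle_trans (Rabs_triang _ _) _.
rewrite Rabs_Ropp !Rabs_mult.
have P (p q : 'I_(n + n)) : Rabs (x p) * Rabs (y q) <= cx * cy.
  by apply: Rmult_le_compat; try exact: Rabs_pos.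
have := P (rshift n i) (lshift n i); have := P (lshift n i) (rshift n i); lra.
Qed.

End Omega.

(* The vertical coordinate of x^-1 * y. *)
Definition vgap n (x y : hpt n) : R := y.2 - x.2 - 2 * omega x.1 y.1.

Lemma hinv_hmul n (x y : hpt n) : hmul (hinv x) y = (vsub y.1 x.1, vgap x y).
Proof.
rewrite /hmul /vgap /= omega_oppl; congr pair; last by ring.
by apply: functional_extensionality => j; rewrite /vadd /vsub; ring.
Qed.

Lemma koranyi_lower n (p : hpt n) :
  0 <= koranyi p /\ norm2 p.1 <= koranyi p * koranyi p /\
  Rabs p.2 <= koranyi p * koranyi p.
Proof.
have N0 := norm2_nonneg p.1.
have X0 : 0 <= norm2 p.1 ^ 2 + p.2 ^ 2 by nra.
rewrite /koranyi sqrt_sqrt; last exact: sqrt_pos.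
split; first exact: sqrt_pos.
split; first by apply: sqrt_sq_le => //; nra.
by apply: sqrt_sq_le; [exact: Rabs_pos | rewrite sqabs; nra].
Qed.

Lemma koranyi_upper n (p : hpt n) B : 0 <= B -> norm2 p.1 <= B * B ->
  Rabs p.2 <= B * B -> koranyi p <= 2 * B.
Proof.
move=> B0 H1 H2; have N0 := norm2_nonneg p.1.
have P2 : p.2 * p.2 <= (B * B) * (B * B).
  by rewrite -sqabs; apply: Rmult_le_compat => //; exact: Rabs_pos.
have P1 : norm2 p.1 * norm2 p.1 <= (B * B) * (B * B).
  by apply: Rmult_le_compat.
rewrite /koranyi -(sqrt_square (2 * B)); last lra.
apply: sqrt_le_1_alt; rewrite -(sqrt_square ((2 * B) * (2 * B))); last nra.
by apply: sqrt_le_1_alt; nra.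
Qed.

Lemma dH_lower n (x y : hpt n) :
  0 <= dH x y /\ norm2 (vsub y.1 x.1) <= dH x y * dH x y /\
  Rabs (vgap x y) <= dH x y * dH x y.
Proof. by rewrite /dH hinv_hmul; exact: koranyi_lower. Qed.

Lemma dH_upper n (x y : hpt n) B : 0 <= B -> norm2 (vsub y.1 x.1) <= B * B ->
  Rabs (vgap x y) <= B * B -> dH x y <= 2 * B.
Proof. by rewrite /dH hinv_hmul => B0 H1 H2; apply: koranyi_upper. Qed.

Definition gauge n (x : hpt n) : R := l1norm x.1 + Rabs x.2.

Lemma gauge_bounds n (x : hpt n) M : gauge x <= M ->
  0 <= M /\ (forall j, Rabs (x.1 j) <= M) /\ Rabs x.2 <= M /\ norm2 x.1 <= M * M.
Proof.
rewrite /gauge => xM; have L0 := l1norm_nonneg x.1; have A0 := Rabs_pos x.2.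
split; first lra.
split; first by move=> j; have := coord_le_l1norm x.1 j; lra.
by split; [lra | have := norm2_le_l1norm x.1; nra].
Qed.

Lemma gauge_dH_continuous n (x y : hpt n) : dH x y <= 1 ->
  gauge y <= gauge x + (INR (n + n) + 1 + 4 * INR n * l1norm x.1) * dH x y.
Proof.
move=> d1; have [d0 [H1 H2]] := dH_lower x y.
set d := dH x y in d0 d1 H1 H2 *.
have hor j : Rabs (vsub y.1 x.1 j) <= d by exact: coord_le_norm.
have Hw := omega_bound (coord_le_l1norm x.1) hor.
have Ew : omega x.1 y.1 = omega x.1 (vsub y.1 x.1).
  by rewrite omega_subr omega_self; ring.
have Hy2 : Rabs y.2 <= Rabs x.2 + Rabs (vgap x y) + 2 * Rabs (omega x.1 y.1).
  have -> : y.2 = x.2 + vgap x y + 2 * omega x.1 y.1 by rewrite /vgap; ring.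
  apply: Rle_trans (Rabs_triang _ _) _.
  rewrite Rabs_mult (Rabs_right 2); last lra.
  have := Rabs_triang x.2 (vgap x y); rewrite /vgap; lra.
rewrite Ew in Hy2.
have Hl1 : l1norm (vsub y.1 x.1) <= INR (n + n) * d by exact: rsum_const_le.
have := l1norm_triang x.1 y.1; have : d * d <= d by nra.
rewrite /gauge; lra.
Qed.

Lemma gauge_sublevel_open n c : is_open (@dH n) (fun y => gauge y < c).
Proof.
move=> x xc.
set L := INR (n + n) + 1 + 4 * INR n * l1norm x.1.
have L0 : 0 < L.
  by have := pos_INR (n + n); have := pos_INR n; have := l1norm_nonneg x.1;
     rewrite /L; nra.
exists (Rmin 1 ((c - gauge x) / (2 * L))); split.
  by apply: Rmin_glb_lt; [lra | apply: Rdiv_lt_0_compat; lra].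
move=> y dxy.
have d1 : dH x y <= 1 by have := Rmin_l 1 ((c - gauge x) / (2 * L)); lra.
have d2 : L * dH x y <= (c - gauge x) / 2.
  have -> : (c - gauge x) / 2 = L * ((c - gauge x) / (2 * L)) by field; lra.
  by apply: Rmult_le_compat_l; have := Rmin_r 1 ((c - gauge x) / (2 * L)); lra.
by have := gauge_dH_continuous d1; rewrite -/L; lra.
Qed.

Lemma compact_bounded n (K : hpt n -> Prop) : is_compact (@dH n) K ->
  exists M, 0 <= M /\ forall x, K x -> gauge x <= M.
Proof.
move=> HK.
have cover x : K x -> exists i : nat, gauge x < INR i.
  by move=> _; have [N HN] := INR_unbounded (gauge x); exists N.
have [l Hl] := HK nat _ (fun i => @gauge_sublevel_open n (INR i)) cover.
exists (INR (list_max l)); split; first exact: pos_INR.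
move=> x Kx; have [i [il xi]] := Hl x Kx.
have : (i <= list_max l)%coq_nat.
  by move: (proj1 (list_max_le l (list_max l)) (le_n _)) => /Forall_forall; apply.
by move/le_INR; lra.
Qed.

Lemma dH_bounded n (x y : hpt n) M : gauge x <= M -> gauge y <= M ->
  dH x y <= 2 * ((1 + INR (n + n)) * (1 + 2 * M)).
Proof.
move=> xM yM.
have [M0 [x1 [x2 _]]] := gauge_bounds xM; have [_ [y1 [y2 _]]] := gauge_bounds yM.
have N0 := pos_INR (n + n); have EN : INR (n + n) = 2 * INR n by rewrite plus_INR; ring.
apply: dH_upper; first by nra.
- have hor j : Rabs (vsub y.1 x.1 j) <= 2 * M.
    have := Rabs_triang (y.1 j) (- x.1 j); rewrite Rabs_Ropp.
    by have := x1 j; have := y1 j; rewrite /vsub /Rminus; lra.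
  by have := norm2_le_coords hor; nra.
- have Hw := omega_bound x1 y1.
  have : Rabs (vgap x y) <= Rabs y.2 + Rabs x.2 + 2 * Rabs (omega x.1 y.1).
    rewrite /vgap; have := Rabs_triang (y.2 - x.2) (- (2 * omega x.1 y.1)).
    have := Rabs_triang y.2 (- x.2).
    by rewrite !Rabs_Ropp Rabs_mult (Rabs_right 2) /Rminus; lra.
  by rewrite EN in N0 *; nra.
Qed.

Lemma dE_le_of_parts n (p q : hpt n) d L : 0 <= d -> 0 <= L ->
  norm2 (vsub p.1 q.1) <= d * d -> Rabs (p.2 - q.2) <= L * d ->
  dE p q <= (1 + L) * d.
Proof.
move=> d0 L0 hor ver; rewrite /dE -(sqrt_square ((1 + L) * d)); last nra.
apply: sqrt_le_1_alt.
have : (p.2 - q.2) ^ 2 <= (L * d) * (L * d).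
  by rewrite /= Rmult_1_r -sqabs; have := Rabs_pos (p.2 - q.2); nra.
nra.
Qed.

Lemma hmul_horizontal n (a : hpt n) v :
  hmul a (v, 0) = (vadd a.1 v, a.2 + 2 * omega a.1 v).
Proof. by rewrite /hmul /= Rplus_0_r. Qed.

Lemma coset_vertical_difference n (x y a a' : hpt n) v v' :
  x = hmul a (v, 0) -> y = hmul a' (v', 0) ->
  a.2 - a'.2 = - vgap x y - 2 * omega x.1 (vsub y.1 x.1)
               + 2 * omega (vsub y.1 x.1) v' + 2 * omega x.1 (vsub v' v).
Proof.
move=> -> ->; rewrite !hmul_horizontal /vgap /=.
rewrite !omega_subr !omega_subl !omega_addl !omega_addr !omega_self.
by rewrite (omega_anti v a.1); ring.
Qed.

Lemma coset_vertical_bound n (x y a a' : hpt n) v v' M d D :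
  x = hmul a (v, 0) -> y = hmul a' (v', 0) ->
  0 <= d -> (forall j, Rabs (x.1 j) <= M) -> (forall j, Rabs (v' j) <= M) ->
  (forall j, Rabs (vsub y.1 x.1 j) <= d) -> (forall j, Rabs (vsub v' v j) <= d) ->
  Rabs (vgap x y) <= D * d ->
  Rabs (a.2 - a'.2) <= (D + 12 * INR n * M) * d.
Proof.
move=> Ex Ey d0 xM vM hor vd gap; rewrite (coset_vertical_difference Ex Ey).
have W1 := omega_bound xM hor; have W2 := omega_bound hor vM.
have W3 := omega_bound xM vd.
set g := vgap x y in gap *.
set w1 := omega x.1 (vsub y.1 x.1) in W1 *.
set w2 := omega (vsub y.1 x.1) v' in W2 *.
set w3 := omega x.1 (vsub v' v) in W3 *.
have T1 := Rabs_triang (- g - 2 * w1 + 2 * w2) (2 * w3).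
have T2 := Rabs_triang (- g - 2 * w1) (2 * w2).
have T3 := Rabs_triang (- g) (- (2 * w1)).
by rewrite /Rminus !Rabs_Ropp !Rabs_mult (Rabs_right 2) in T1 T2 T3 *; lra.
Qed.

Section Projection.
Variables (n : nat) (V : vec (n + n) -> Prop) (pi : hpt n -> hpt n).
Hypothesis HV : is_subspace V.
Hypothesis HP : is_Vperp_projection V pi.

Lemma subspace_vsub v v' : V v -> V v' -> V (vsub v v').
Proof.
case: HV => _ [Vadd Vscal] Vv Vv'.
have -> : vsub v v' = vadd v (vscal (-1) v').
  by apply: functional_extensionality => j; rewrite /vsub /vadd /vscal; ring.
by apply: Vadd => //; exact: Vscal.
Qed.

Lemma orth_vsub a a' : orth V a -> orth V a' -> orth V (vsub a a').
Proof.
move=> Ha Ha' u Vu.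
have -> : inner (vsub a a') u = inner a u - inner a' u.
  by rewrite /inner -rsum_sub; apply: rsum_ext => i; rewrite /vsub; ring.
by rewrite Ha // Ha' //; ring.
Qed.

Lemma orth_split_contracts a a' v v' : orth V a -> orth V a' -> V v -> V v' ->
  norm2 (vsub a a') <= norm2 (vsub (vadd a v) (vadd a' v')) /\
  norm2 (vsub v v') <= norm2 (vsub (vadd a v) (vadd a' v')).
Proof.
move=> Ha Ha' Vv Vv'.
have -> : vsub (vadd a v) (vadd a' v') = vadd (vsub a a') (vsub v v').
  by apply: functional_extensionality => j; rewrite /vsub /vadd; ring.
by apply: pythagoras; apply: orth_vsub => //; exact: subspace_vsub.
Qed.

Lemma pi_lipschitz M : 0 <= M -> exists L, forall x y,
  gauge x <= M -> gauge y <= M -> dE (pi x) (pi y) <= L * dH x y.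
Proof.
move=> M0; set B := (1 + INR (n + n)) * (1 + 2 * M).
exists (1 + (2 * B + 12 * INR n * M)) => x y xM yM.
have [Ha [v [Vv Ex]]] := HP x; have [Ha' [v' [Vv' Ey]]] := HP y.
have Ex1 : x.1 = vadd (pi x).1 v by rewrite {1}Ex.
have Ey1 : y.1 = vadd (pi y).1 v' by rewrite {1}Ey.
have [d0 [hor gap]] := dH_lower x y; have dB := dH_bounded xM yM.
set d := dH x y in d0 hor gap dB *.
have [_ [xM1 [_ _]]] := gauge_bounds xM; have [_ [_ [_ yN]]] := gauge_bounds yM.
have [Nh Nv] := orth_split_contracts Ha Ha' Vv Vv'.
have [_ Nv'] := pythagoras (Ha' v' Vv').
rewrite -Ex1 -Ey1 in Nh Nv; rewrite -Ey1 in Nv'.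
have hor' : norm2 (vsub x.1 y.1) <= d * d by rewrite norm2_vsub_sym.
have N0 := pos_INR n; have B0 : 0 <= B by rewrite /B; have := pos_INR (n + n); nra.
apply: dE_le_of_parts => //; [nra | lra |].
apply: (coset_vertical_bound Ex Ey) => //.
- by move=> j; apply: coord_le_norm => //; lra.
- by move=> j; exact: coord_le_norm.
- by move=> j; apply: coord_le_norm => //; rewrite norm2_vsub_sym; lra.
- by rewrite -/B in dB; nra.
Qed.

Lemma pi_fixes_Vperp w : Vperp V w -> pi w = w.
Proof.
move=> Hw; have [Ha [v [Vv Ew]]] := HP w.
have Ew1 : vsub w.1 (pi w).1 = v.
  rewrite {1}Ew hmul_horizontal /=.
  by apply: functional_extensionality => j; rewrite /vsub /vadd; ring.
have vv : norm2 v <= 0 * 0.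
  by rewrite /norm2 -{1}Ew1 (orth_vsub Hw Ha Vv); lra.
have v0 : v = @vzero (n + n).
  apply: functional_extensionality => j.
  by have := coord_le_norm j (Rle_refl 0) vv; rewrite /vzero; split_Rabs; lra.
rewrite {2}Ew v0 hmul_horizontal omega_zero_r Rmult_0_r Rplus_0_r.
by case: (pi w) => a t /=; congr pair; apply: functional_extensionality => j;
   rewrite /vadd /vzero; ring.
Qed.

End Projection.

Lemma progression_approx (N : nat) lo dl x : 0 < dl ->
  lo <= x -> x <= lo + INR N * dl ->
  exists j : nat, (j <= N)%coq_nat /\ Rabs (x - (lo + INR j * dl)) <= dl.
Proof.
move=> dl0; elim: N => [|N IH] H1 H2.
  by exists 0%nat; split; [lia | rewrite /= in H2 *; rewrite Rabs_right; lra].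
rewrite S_INR in H2; case: (Rle_lt_dec x (lo + INR N * dl)) => Hx.
  by have [j [jN Hj]] := IH H1 Hx; exists j; split => //; lia.
by exists N; split; [lia | rewrite Rabs_right; lra].
Qed.

Lemma In_mem (T : eqType) (x : T) (s : list T) : x \in s -> In x s.
Proof.
elim: s => [|a s IH] //=.
by rewrite in_cons => /orP [/eqP ->|xs]; [left | right; exact: IH].
Qed.

Definition index_tuples (k N : nat) : list ('I_k -> nat) :=
  List.map (fun f : {ffun 'I_k -> 'I_N.+1} => fun i => nat_of_ord (f i))
    (enum {ffun 'I_k -> 'I_N.+1}).

Lemma index_tuples_length k N : length (index_tuples k N) = Nat.pow N.+1 k.
Proof.
have size_length (s : seq {ffun 'I_k -> 'I_N.+1}) : length s = size s.
  by elim: s => [|a s IH] //=; rewrite IH.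
have expE m e : expn m e = Nat.pow m e.
  by elim: e => [|e IH] //; rewrite expnS IH.
by rewrite length_map size_length -cardE card_ffun !card_ord expE.
Qed.

Lemma index_tuples_cover k N (f : 'I_k -> nat) : (forall i, (f i <= N)%coq_nat) ->
  exists g, In g (index_tuples k N) /\ forall i, g i = f i.
Proof.
move=> fN; exists (fun i => nat_of_ord ([ffun i => (inord (f i) : 'I_N.+1)] i)).
split; first by apply: in_map; apply: In_mem; rewrite mem_enum.
by move=> i; rewrite ffunE inordK //; apply/leP; have := fN i; lia.
Qed.

Lemma cube_grid k L s : 0 <= L -> 0 < s -> exists G : list ('I_k -> R),
  INR (length G) <= (2 * L / s + 2) ^ k /\
  forall c, (forall i, Rabs (c i) <= L) ->
    exists g, In g G /\ forall i, Rabs (c i - g i) <= s.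
Proof.
move=> L0 s0.
have [N [N1 N2]] : exists N : nat, 2 * L / s <= INR N /\ INR N <= 2 * L / s + 1.
  by apply: nat_between; apply: Rmult_le_pos; [lra | apply/Rlt_le/Rinv_0_lt_compat].
have NsL : 2 * L <= INR N * s.
  have -> : 2 * L = 2 * L / s * s by field; lra.
  by apply: Rmult_le_compat_r; lra.
pose grid (f : 'I_k -> nat) i := - L + INR (f i) * s.
exists (map grid (index_tuples k N)); split.
  rewrite length_map index_tuples_length pow_INR S_INR.
  by apply: pow_incr; split; [have := pos_INR N | ]; lra.
move=> c cL.
have near i : exists j : nat, (j <= N)%coq_nat /\ Rabs (c i - (- L + INR j * s)) <= s.
  by have := cL i; move=> ?; apply: progression_approx => //; split_Rabs; lra.
pose f i := proj1_sig (constructive_indefinite_description _ (near i)).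
have fP i : (f i <= N)%coq_nat /\ Rabs (c i - (- L + INR (f i) * s)) <= s.
  exact: proj2_sig (constructive_indefinite_description _ (near i)).
have [g [gN gf]] := index_tuples_cover (fun i => proj1 (fP i)).
exists (grid g); split; first exact: in_map.
by move=> i; rewrite /grid gf; exact: (proj2 (fP i)).
Qed.

Lemma interval_grid L s : 0 <= L -> 0 < s -> exists S : list R,
  INR (length S) <= 2 * L / s + 2 /\
  forall t, Rabs t <= L -> exists u, In u S /\ Rabs (t - u) <= s.
Proof.
move=> L0 s0; have [G [Glen Gnet]] := @cube_grid 1 L s L0 s0.
exists (map (fun g => g ord0) G); split; first by rewrite length_map -(pow_1 (_ + _)).
move=> t tL; have [g [Gg gt]] := Gnet (fun _ => t) (fun _ => tL).
by exists (g ord0); split; [exact: (in_map (fun g => g ord0)) | exact: gt].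
Qed.

Lemma basis_left_inverse m k (b : 'I_k -> vec m) :
  (forall c, lincomb c b = @vzero m -> forall i, c i = 0) ->
  exists D : 'I_m -> 'I_k -> R,
    forall c i, c i = rsum (fun j => lincomb c b j * D j i).
Proof.
move=> indep.
pose B := ((\matrix_(i < k, j < m) b i j)%R : 'M[R]_(k, m)).
have lincombE (u : 'rV[R]_k) j : (u *m B)%R ord0 j = lincomb (u ord0) b j.
  by rewrite !mxE; apply: eq_bigr => i _; rewrite mxE.
have /row_freeP [D BD] : row_free B.
  apply: inj_row_free => u uB0; apply/matrixP => i0 i; rewrite (ord1 i0) mxE.
  apply: (indep (u ord0)); apply: functional_extensionality => j.
  by rewrite -lincombE uB0 mxE.
exists D => c i; pose u := ((\row_(i < k) c i)%R : 'rV[R]_k).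
have -> : c i = (u *m B *m D)%R ord0 i by rewrite -mulmxA BD mulmx1 mxE.
rewrite mxE; apply: eq_bigr => j _; rewrite lincombE; congr (lincomb _ b j * _)%R.
by apply: functional_extensionality => i1; rewrite mxE.
Qed.

Lemma basis_coeff_bound m k (b : 'I_k -> vec m) :
  (forall c, lincomb c b = @vzero m -> forall i, c i = 0) ->
  exists beta, 0 <= beta /\ forall c L, 0 <= L ->
    (forall j, Rabs (lincomb c b j) <= L) -> forall i, Rabs (c i) <= beta * L.
Proof.
move=> indep; have [D HD] := basis_left_inverse indep.
have [Bd [Bd0 HBd]] := entry_bound D.
exists (INR m * Bd); split; first by apply: Rmult_le_pos => //; exact: pos_INR.
move=> c L L0 cL i; rewrite HD; apply: Rle_trans (rsum_abs _) _.
have -> : INR m * Bd * L = INR m * (L * Bd) by ring.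
apply: rsum_const_le => j; rewrite Rabs_mult.
by apply: Rmult_le_compat => //; exact: Rabs_pos.
Qed.

Lemma lincomb_coord_bound m k (c : 'I_k -> R) (b : 'I_k -> vec m) s Bb j :
  (forall i, Rabs (c i) <= s) -> (forall i j, Rabs (b i j) <= Bb) ->
  Rabs (lincomb c b j) <= INR k * (s * Bb).
Proof.
move=> cs bB; apply: Rle_trans (rsum_abs _) _; apply: rsum_const_le => i.
by rewrite Rabs_mult; apply: Rmult_le_compat => //; exact: Rabs_pos.
Qed.

Section SubspaceGrid.
Variables (m k : nat) (V : vec m -> Prop) (b : 'I_k -> vec m).
Hypothesis indep : forall c, lincomb c b = @vzero m -> forall i, c i = 0.
Hypothesis span : forall v, V v <-> exists c : 'I_k -> R, v = lincomb c b.

Lemma subspace_grid M : 0 <= M -> exists A, 0 <= A /\ forall r, 0 < r -> r < 1 ->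
  exists G, INR (length G) <= (A / r) ^ k /\ (forall g, In g G -> V g) /\
    forall v, V v -> (forall j, Rabs (v j) <= M) ->
      exists g, In g G /\ forall j, Rabs (g j - v j) <= r.
Proof.
move=> M0; have [beta [beta0 Hbeta]] := basis_coeff_bound indep.
have [Bb [Bb0 HBb]] := entry_bound b.
have k0 := pos_INR k.
set Q := INR k * Bb + 1; set Lc := beta * M.
have Q1 : 1 <= Q by rewrite /Q; nra.
have Lc0 : 0 <= Lc by exact: Rmult_le_pos.
exists (2 * Lc * Q + 2); split; first by nra.
move=> r r0 r1; set s := r / Q.
have s0 : 0 < s by apply: Rdiv_lt_0_compat; lra.
have [G0 [G0len G0net]] := cube_grid k Lc0 s0.
exists (map (fun c => lincomb c b) G0); split; [|split].
- rewrite length_map; apply: Rle_trans G0len _; apply: pow_incr; split.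
    apply: Rplus_le_le_0_compat; last lra.
    by apply: Rmult_le_pos; [lra | apply/Rlt_le/Rinv_0_lt_compat].
  have -> : 2 * Lc / s = 2 * Lc * Q / r by rewrite /s; field; lra.
  have -> : (2 * Lc * Q + 2) / r = 2 * Lc * Q / r + 2 / r by field; lra.
  have : 2 <= 2 / r by apply: (Rmult_le_reg_r r) => //; field_simplify; lra.
  lra.
- by move=> g /in_map_iff [c [<- _]]; apply/span; exists c.
- move=> v Vv vM; have [c Ec] := (proj1 (span v)) Vv.
  have cL i : Rabs (c i) <= Lc by apply: Hbeta => // j; rewrite -Ec.
  have [g0 [G0g g0c]] := G0net c cL.
  exists (lincomb g0 b); split; first exact: (in_map (fun c => lincomb c b)).
  move=> j; rewrite Ec.
  have -> : lincomb g0 b j - lincomb c b j = lincomb (fun i => g0 i - c i) b j.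
    by rewrite /lincomb -rsum_sub; apply: rsum_ext => i; ring.
  apply: Rle_trans (lincomb_coord_bound _ _ HBb) _.
    by move=> i; rewrite Rabs_minus_sym; exact: g0c.
  have -> : r = s * Q by rewrite /s; field; lra.
  rewrite /Q; nra.
Qed.

End SubspaceGrid.

(* The height of w above a, corrected by the symplectic twist of the
   horizontal displacement: the vertical offset between a * (v, 0) and
   w * (g, 0), up to the term omega(v, g). *)
Definition height_offset n (a w : hpt n) (v g : vec (n + n)) : R :=
  w.2 - a.2 + 2 * omega (vsub w.1 a.1) (vadd (vadd g v) a.1).

Lemma vgap_cosets n (a w : hpt n) v g s :
  vgap (hmul a (v, 0)) (hmul w (g, s)) = height_offset a w v g + s - 2 * omega v g.
Proof.
rewrite hmul_horizontal /vgap /height_offset /=.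
rewrite !omega_subl !omega_addl !omega_addr !omega_self.
by rewrite (omega_anti w.1 v) (omega_anti w.1 a.1); ring.
Qed.

Lemma height_offset_bound n (a w : hpt n) v g M r : 0 <= M -> 0 <= r -> r <= 1 ->
  (forall j, Rabs (a.1 j) <= M) -> (forall j, Rabs (v j) <= M) ->
  (forall j, Rabs (g j - v j) <= r) -> (forall j, Rabs (vsub w.1 a.1 j) <= r) ->
  Rabs (w.2 - a.2) <= r ->
  Rabs (height_offset a w v g) <= (1 + 4 * INR n * (3 * M + 1)) * r.
Proof.
move=> M0 r0 r1 aM vM gv hor ver.
have sum j : Rabs (vadd (vadd g v) a.1 j) <= 3 * M + 1.
  rewrite /vadd; have := Rabs_triang (g j + v j) (a.1 j).
  have := Rabs_triang (g j - v j) (v j); have -> : g j - v j + v j = g j by ring.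
  have := Rabs_triang (g j) (v j); have := gv j; have := vM j; have := aM j; lra.
have W := omega_bound hor sum; have := pos_INR n => n0.
have := Rabs_triang (w.2 - a.2) (2 * omega (vsub w.1 a.1) (vadd (vadd g v) a.1)).
rewrite Rabs_mult (Rabs_right 2) /height_offset; [nra | lra].
Qed.

Lemma coset_translate_close n (a w : hpt n) v g s r :
  omega v g = 0 -> 0 <= r ->
  (forall j, Rabs (vsub w.1 a.1 j) <= r) -> (forall j, Rabs (g j - v j) <= r) ->
  Rabs (height_offset a w v g + s) <= r * r ->
  dH (hmul a (v, 0)) (hmul w (g, s)) <= 4 * (INR (n + n) + 1) * r.
Proof.
move=> vg r0 hor gv ver; have N0 := pos_INR (n + n).
have -> : 4 * (INR (n + n) + 1) * r = 2 * (2 * (INR (n + n) + 1) * r) by ring.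
apply: dH_upper; first by nra.
- have coord j : Rabs (vsub (hmul w (g, s)).1 (hmul a (v, 0)).1 j) <= 2 * r.
    rewrite /= /vsub /vadd.
    have -> : w.1 j + g j - (a.1 j + v j) = vsub w.1 a.1 j + (g j - v j).
      by rewrite /vsub; ring.
    by have := Rabs_triang (vsub w.1 a.1 j) (g j - v j); have := hor j; have := gv j; lra.
  by have := norm2_le_coords coord; nra.
- rewrite vgap_cosets vg Rmult_0_r Rminus_0_r.
  have : r * r <= 2 * (INR (n + n) + 1) * r * (2 * (INR (n + n) + 1) * r) by nra.
  lra.
Qed.

Lemma dE_lt_coords n (p q : hpt n) r : dE p q < r ->
  (forall j, Rabs (vsub q.1 p.1 j) <= r) /\ Rabs (q.2 - p.2) <= r.
Proof.
move=> pq; have N0 := norm2_nonneg (vsub p.1 q.1).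
have := sq_le_of_sqrt_lt (Rplus_le_le_0_compat _ _ N0 (pow2_ge_0 (p.2 - q.2))) pq.
have r0 : 0 <= r.
  have := sqrt_pos (norm2 (vsub p.1 q.1) + (p.2 - q.2) ^ 2). rewrite /dE in pq; lra.
move=> H; split.
  move=> j; apply: coord_le_norm => //; rewrite norm2_vsub_sym.
  by have := pow2_ge_0 (p.2 - q.2); lra.
apply: abs_le_of_sq => //.
have -> : (q.2 - p.2) * (q.2 - p.2) = (p.2 - q.2) ^ 2 by ring.
lra.
Qed.

Lemma product_count k (a b : nat) A1 A2 r : 0 < r ->
  INR a <= (A1 / r) ^ k -> INR b <= A2 / r ->
  INR (a * b) <= A1 ^ k * A2 * Rpower r (- INR (k + 1)).
Proof.
move=> r0 aA bA; rewrite mult_INR Rpower_Ropp Rpower_pow //.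
have -> : A1 ^ k * A2 * / r ^ (k + 1) = (A1 / r) ^ k * (A2 / r).
  rewrite /Rdiv Rpow_mult_distr pow_inv pow_add /=.
  by field; split; [lra | apply: pow_nonzero; lra].
by apply: Rmult_le_compat => //; exact: pos_INR.
Qed.

Section FibreCover.
Variables (n k : nat) (V : vec (n + n) -> Prop) (pi : hpt n -> hpt n).
Variable b : 'I_k -> vec (n + n).
Hypothesis iso : isotropic V.
Hypothesis HP : is_Vperp_projection V pi.
Hypothesis indep : forall c, lincomb c b = @vzero (n + n) -> forall i, c i = 0.
Hypothesis span : forall v, V v <-> exists c : 'I_k -> R, v = lincomb c b.

(* Within a bounded set, the preimage of a Euclidean r-ball of V^perp x R is
   covered by O(r^-(k+1)) Koranyi balls of radius O(r), centred at the points
   w * (g, -u) with g in an r-net of V and u in an r^2-net of [-O(r), O(r)]. *)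
Lemma pi_fibre_cover M : 0 <= M -> exists C, 1 <= C /\
  forall w r, 0 < r -> r < 1 -> exists l : list (hpt n),
    INR (length l) <= C * Rpower r (- INR (k + 1)) /\
    forall x, gauge x <= M -> dE (pi x) w < r -> exists y, In y l /\ dH x y < C * r.
Proof.
move=> M0; have [A1 [A10 Vgrid]] := subspace_grid indep span M0.
set Bv := 1 + 4 * INR n * (3 * M + 1); set A2 := 2 * Bv + 2.
have Bv0 : 0 <= Bv by have := pos_INR n; rewrite /Bv; nra.
have N0 := pos_INR (n + n).
have count0 : 0 <= A1 ^ k * A2 by apply: Rmult_le_pos; [exact: pow_le | rewrite /A2; lra].
exists (A1 ^ k * A2 + 4 * (INR (n + n) + 1) + 1); split; first lra.
move=> w r r0 r1; have [G [Glen [GV Gnet]]] := Vgrid r r0 r1.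
have [S [Slen Snet]] := @interval_grid (Bv * r) (r * r) ltac:(nra) ltac:(nra).
have Slen' : INR (length S) <= A2 / r.
  apply: Rle_trans Slen _.
  have -> : 2 * (Bv * r) / (r * r) = 2 * Bv / r by field; lra.
  have -> : A2 / r = 2 * Bv / r + 2 / r by rewrite /A2; field; lra.
  have : 2 <= 2 / r by apply: (Rmult_le_reg_r r) => //; field_simplify; lra.
  lra.
exists (map (fun p => hmul w (p.1, - p.2)) (list_prod G S)); split.
  rewrite length_map length_prod.
  apply: Rle_trans (product_count r0 Glen Slen') _.
  by apply: Rmult_le_compat_r; [rewrite /Rpower; apply/Rlt_le/exp_pos | lra].
move=> x xM dxw; have [Ha [v [Vv Ex]]] := HP x.
move: Ha Ex dxw; set a := pi x => Ha Ex dxw.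
have [_ [_ [_ xN]]] := gauge_bounds xM.
have [aN vN] := pythagoras (Ha v Vv).
have x1 : x.1 = vadd a.1 v by rewrite Ex.
rewrite -x1 in aN vN.
have aM j : Rabs (a.1 j) <= M by apply: coord_le_norm => //; lra.
have vM j : Rabs (v j) <= M by apply: coord_le_norm => //; lra.
have [hor ver] := dE_lt_coords dxw.
have [g [Gg gv]] := Gnet v Vv vM.
have Toff := height_offset_bound M0 (Rlt_le _ _ r0) (Rlt_le _ _ r1) aM vM gv hor ver.
have [u [Su uT]] := Snet _ Toff.
exists (hmul w (g, - u)); split.
  by apply: (in_map (fun p => hmul w (p.1, - p.2)) _ (g, u)); exact: in_prod.
rewrite Ex; apply: Rle_lt_trans (coset_translate_close _ _ hor gv _) _.
- exact: iso Vv (GV g Gg).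
- lra.
- exact: uT.
- nra.
Qed.

End FibreCover.

Theorem proposition6p4 (n k : nat) (V : vec (n + n) -> Prop)
  (pi : hpt n -> hpt n) :
  is_subspace V -> isotropic V -> has_dim V k ->
  is_Vperp_projection V pi ->
  foliation (@dH n) (Vperp V) (@dE n) pi (INR (k + 1)).
Proof.
move=> HV iso [b [indep span]] HP; split; [|split].
- by move=> x; exact: (proj1 (HP x)).
- by move=> w Hw; exists w; exact: pi_fixes_Vperp.
move=> K HK; have [M [M0 KM]] := compact_bounded HK.
have [L Lip] := pi_lipschitz HV HP M0.
have [C [C1 Cover]] := pi_fibre_cover iso HP indep span M0.
split; first by exists L => x y Kx Ky; apply: Lip; exact: KM.
exists C, 1; split => //; split; first lra.
move=> w r _ r0 r1; have [l [llen lcov]] := Cover w r r0 r1.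
by exists l; split => // x Kx; apply: lcov; exact: KM.
Qed.
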